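(* Let $L=L(m,n;k,l)$ be an $L$-shaped supergrid graph with distinct vertices $s,t$ such that $m-k=1$, $n-l=2$, $l=1$, $k\ge 2$, and $\{s,t\}=\{(1,2),(2,3)\}$ or $\{s,t\}=\{(1,3),(2,2)\}$. Then every simple path between $s$ and $t$ in $L$ has at most $mn-kl-1$ vertices.
   Context: The infinite supergrid graph has as vertices all points $(x,y)\in\mathbb{Z}^2$, two distinct vertices $u,v$ being adjacent iff $|u_x-v_x|\le 1$ and $|u_y-v_y|\le 1$. For integers $m,n>1$ and $k,l\ge 1$ with $m-k\ge 1$, $n-l\ge 1$, $L(m,n;k,l)$ is the subgraph induced by $\{(x,y):1\le x\le m,\ 1\le y\le n\}\setminus\{(x,y): m-k+1\le x\le m,\ 1\le y\le l\}$ (so it has $mn-kl$ vertices). *)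

From mathcomp Require Import all_boot.
Set Implicit Arguments. Unset Strict Implicit. Unset Printing Implicit Defensive.

(* Vertices are points (x,y) of Z^2; all vertices of L(m,n;k,l) have positive
   coordinates, so we represent them as pairs of naturals. *)
Definition pt := (nat * nat)%type.

Definition sg_adj (u v : pt) : bool :=
  [&& u != v, u.1 <= v.1 + 1, v.1 <= u.1 + 1, u.2 <= v.2 + 1 & v.2 <= u.2 + 1].

Definition inL (m n k l : nat) (v : pt) : bool :=
  [&& 1 <= v.1 <= m, 1 <= v.2 <= n &
      ~~ ((m - k + 1 <= v.1 <= m) && (1 <= v.2 <= l))].

Definition simple_path_in_L (m n k l : nat) (s t : pt) (q : seq pt) : Prop :=
  [/\ all (inL m n k l) (s :: q), path sg_adj s q, uniq (s :: q) & last s q = t].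

From mathcomp Require Import all_boot zify.

Set Implicit Arguments.
Unset Strict Implicit.
Unset Printing Implicit Defensive.

(* The corner (1,1) of L(m,3;m-1,1) has only the two neighbours (1,2) and (2,2),
   so a path through all 2m+1 vertices must pass through (1,2), (1,1), (2,2)
   consecutively.  Since one end of the path also lies in the first column, the
   remaining first-column vertex (1,2) or (1,3) has too few free neighbours.
   Recording each vertex by its position along the path, "u follows v" becomes
   "pos u = pos v + 1", and the constraints force the path to have at most five
   vertices, while 2m+1 >= 7. *)

Section PathPositions.

Variables (T : eqType) (e : rel T) (x : T) (p : seq T).
Hypotheses (e_sym : symmetric e) (p_path : path e x p) (p_uniq : uniq (x :: p)).

Local Notation P := (x :: p).

Lemma path_nth_adj i : i.+1 < size P -> e (nth x P i) (nth x P i.+1).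
Proof. by move=> lt_iP; apply: (pathP x p_path). Qed.

Lemma index_nbr_succ v (N : seq T) : v \in P -> (index v P).+1 < size P ->
  {in P, forall w, e v w -> w \in N} ->
  (index v P).+1 \in [seq index w P | w <- N].
Proof.
move=> vP lt_vP closedN; set w := nth x P (index v P).+1.
have -> : (index v P).+1 = index w P by rewrite index_uniq.
apply/map_f/closedN; first exact: mem_nth.
by rewrite -{1}(nth_index x vP); apply: path_nth_adj.
Qed.

Lemma index_nbr_pred v (N : seq T) : v \in P -> 0 < index v P ->
  {in P, forall w, e v w -> w \in N} ->
  (index v P).-1 \in [seq index w P | w <- N].
Proof.
move=> vP gt0_v closedN; set i := (index v P).-1; set w := nth x P i.
have lt_iP : i.+1 < size P by rewrite prednK // index_mem.
have -> : i = index w P by rewrite index_uniq // ltnW.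
apply/map_f/closedN; first by rewrite mem_nth // ltnW.
by rewrite e_sym -{1}(nth_index x vP) -(prednK gt0_v); apply: path_nth_adj.
Qed.

End PathPositions.

Lemma sg_adj_sym : symmetric sg_adj.
Proof. by move=> u v; rewrite /sg_adj eq_sym; lia. Qed.

Lemma simple_path_in_L_rev m n k l s t q : simple_path_in_L m n k l s t q ->
  simple_path_in_L m n k l t s (rev (belast s q)) /\
  size (rev (belast s q)) = size q.
Proof.
case=> P_in P_path P_uniq P_last.
have P_rev : t :: rev (belast s q) = rev (s :: q).
  by rewrite [s :: q]lastI rev_rcons P_last.
rewrite size_rev size_belast; split=> //; split.
- by rewrite P_rev all_rev.
- by rewrite -P_last rev_path; apply: sub_path P_path => u v; rewrite sg_adj_sym.
- by rewrite P_rev rev_uniq.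
- by rewrite -[last t _]/(last t (t :: _)) P_rev rev_cons last_rcons.
Qed.

Definition L3_vertices m : seq pt :=
  (1, 1) :: [seq (x, y) | x <- iota 1 m, y <- [:: 2; 3]].

Lemma size_L3_vertices m : size (L3_vertices m) = 2 * m + 1.
Proof.
by rewrite /L3_vertices -cat1s size_cat size_allpairs size_iota addnC mulnC.
Qed.

Lemma mem_L3_vertices m v : inL m 3 (m - 1) 1 v -> v \in L3_vertices m.
Proof.
case: v => x y; rewrite /inL /= => vL; rewrite inE.
have [y_le1|y_gt1] := leqP y 1.
  by apply/orP; left; rewrite xpair_eqE; lia.
apply/orP; right; apply/allpairsP; exists (x, y); split=> //=.
  by rewrite mem_iota; lia.
by rewrite !inE; lia.
Qed.

Definition first_two_columns : seq pt :=
  [:: (1, 1); (1, 2); (1, 3); (2, 2); (2, 3)].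

Lemma sg_adj_first_column m (y : nat) (w : pt) :
  sg_adj (1, y) w -> inL m 3 (m - 1) 1 w ->
  w \in [seq u <- first_two_columns | sg_adj (1, y) u].
Proof.
move=> adj_w; rewrite mem_filter adj_w; case: w adj_w => x' y'.
by rewrite /sg_adj /inL !inE /= !xpair_eqE; lia.
Qed.

Section HamiltonianPath.

Variables (m : nat) (x : pt) (p : seq pt).
Hypotheses (m_ge3 : 3 <= m) (P_in : all (inL m 3 (m - 1) 1) (x :: p)).
Hypotheses (P_path : path sg_adj x p) (P_uniq : uniq (x :: p)).
Hypothesis P_size : size (x :: p) = 2 * m + 1.

Local Notation P := (x :: p).
Local Notation pos v := (index v P).

Lemma mem_hamiltonian v : inL m 3 (m - 1) 1 v -> v \in P.
Proof.
have P_sub : {subset P <= L3_vertices m} by move=> w /(allP P_in)/mem_L3_vertices.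
have P_full : size (L3_vertices m) <= size P by rewrite size_L3_vertices P_size.
have [_ P_eq] := uniq_min_size P_uniq P_sub P_full.
by move/mem_L3_vertices; rewrite P_eq.
Qed.

Lemma inL_first_two_columns : all (inL m 3 (m - 1) 1) first_two_columns.
Proof. by rewrite /= /inL /=; lia. Qed.

Lemma pos_first_two_columns_le : all (fun v => pos v <= 2 * m) first_two_columns.
Proof.
apply/allP=> v /(allP inL_first_two_columns)/mem_hamiltonian.
by rewrite -index_mem P_size addn1 ltnS.
Qed.

Lemma pos_last : pos (last x p) = 2 * m.
Proof. by rewrite index_last //; move: P_size; rewrite /= addn1 => -[]. Qed.

Lemma uniq_pos_first_two_columns : uniq [seq pos v | v <- first_two_columns].
Proof.
rewrite map_inj_in_uniq // => u v.
move=> /(allP inL_first_two_columns)/mem_hamiltonian uP.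
move=> /(allP inL_first_two_columns)/mem_hamiltonian vP.
by rewrite -{2}(nth_index x uP) -{2}(nth_index x vP) => ->.
Qed.

Lemma first_column_pos_succ (y : nat) :
  (1, y) \in first_two_columns -> pos (1, y) < 2 * m ->
  (pos (1, y)).+1 \in
    [seq pos w | w <- [seq u <- first_two_columns | sg_adj (1, y) u]].
Proof.
move=> /(allP inL_first_two_columns)/mem_hamiltonian vP lt_v.
apply: (index_nbr_succ P_path P_uniq vP); first by rewrite P_size addn1.
by move=> w /(allP P_in) wL adj_w; apply: sg_adj_first_column adj_w wL.
Qed.

Lemma first_column_pos_pred (y : nat) :
  (1, y) \in first_two_columns -> 0 < pos (1, y) ->
  (pos (1, y)).-1 \in
    [seq pos w | w <- [seq u <- first_two_columns | sg_adj (1, y) u]].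
Proof.
move=> /(allP inL_first_two_columns)/mem_hamiltonian vP gt0_v.
apply: (index_nbr_pred sg_adj_sym P_path P_uniq vP gt0_v).
by move=> w /(allP P_in) wL adj_w; apply: sg_adj_first_column adj_w wL.
Qed.

Lemma hamiltonian_ends :
  ~ (x = (1, 2) /\ last x p = (2, 3)) /\ ~ (x = (1, 3) /\ last x p = (2, 2)).
Proof.
split=> -[x_eq last_eq].
all: have := pos_last; have := uniq_pos_first_two_columns.
all: have := pos_first_two_columns_le.
all: have := @first_column_pos_succ 1 isT; have := @first_column_pos_pred 1 isT.
all: have := @first_column_pos_pred 2 isT.
all: have := @first_column_pos_succ 3 isT; have := @first_column_pos_pred 3 isT.
all: by rewrite last_eq x_eq /= !inE => *; lia.
Qed.

End HamiltonianPath.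

Lemma simple_path_L3_size_le m s t q :
  simple_path_in_L m 3 (m - 1) 1 s t q -> size (s :: q) <= 2 * m + 1.
Proof.
case=> P_in _ P_uniq _; rewrite -size_L3_vertices.
by apply: uniq_leq_size P_uniq _ => v /(allP P_in)/mem_L3_vertices.
Qed.

Lemma simple_path_L3_not_hamiltonian m s t q : 3 <= m ->
  simple_path_in_L m 3 (m - 1) 1 s t q ->
  (s = (1, 2) /\ t = (2, 3)) \/ (s = (1, 3) /\ t = (2, 2)) ->
  size (s :: q) <= 2 * m.
Proof.
move=> m_ge3 st_path ends; have := simple_path_L3_size_le st_path.
rewrite leq_eqVlt addn1 ltnS => /orP[/eqP P_size|//].
case: st_path P_size => P_in P_path P_uniq P_last; rewrite -addn1 => P_size.
have [] := hamiltonian_ends m_ge3 P_in P_path P_uniq P_size.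
by rewrite P_last; tauto.
Qed.

Theorem lemma12 (m n k l : nat) (s t : pt) :
  1 < m -> 1 < n -> 1 <= k -> 1 <= l -> 1 <= m - k -> 1 <= n - l ->
  inL m n k l s -> inL m n k l t -> s <> t ->
  m - k = 1 -> n - l = 2 -> l = 1 -> 2 <= k ->
  ((s = (1, 2) /\ t = (2, 3)) \/ (s = (2, 3) /\ t = (1, 2)) \/
   (s = (1, 3) /\ t = (2, 2)) \/ (s = (2, 2) /\ t = (1, 3))) ->
  forall q : seq pt, simple_path_in_L m n k l s t q ->
    size (s :: q) <= m * n - k * l - 1.
Proof.
move=> _ _ _ _ _ _ _ _ _ mk nl l1 k_ge2 ends q st_path.
have n3 : n = 3 by lia.
have km : k = m - 1 by lia.
have m_ge3 : 3 <= m by lia.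
subst n l k; rewrite (_ : _ - _ - 1 = 2 * m); last by lia.
have [ts_path ts_size] := simple_path_in_L_rev st_path.
have := simple_path_L3_not_hamiltonian m_ge3 ts_path.
have := simple_path_L3_not_hamiltonian m_ge3 st_path.
by rewrite /= ts_size; tauto.
Qed.
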